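(* Let $G$ be a finite simple graph with $G\in\mathcal{F}_2$. Then $crx_2(G)=3$ if and only if $G$ is a complete graph on at least $3$ vertices.
   Context: An edge-coloured cycle is rainbow if all its edges have distinct colours. For $k\ge 1$, $\mathcal{F}_k$ is the family of graphs in which any $k$ vertices lie on a common cycle. For $G\in\mathcal{F}_k$, a $k$-rainbow cycle colouring of $G$ is an edge-colouring such that any $k$ vertices of $G$ lie on a common rainbow cycle; $crx_k(G)$ is the minimum number of colours in a $k$-rainbow cycle colouring of $G$. *)

From mathcomp Require Import all_boot.
Set Implicit Arguments. Unset Strict Implicit. Unset Printing Implicit Defensive.

(* A finite simple graph: vertex type T : finType, adjacency e : rel T,
   assumed symmetric and irreflexive (hypotheses in the theorem). *)

Definition is_cycle (T : finType) (e : rel T) (p : seq T) : bool :=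
  [&& 3 <= size p, uniq p & cycle e p].

Definition cycle_edges (T : eqType) (p : seq T) : seq (T * T) :=
  zip p (rot 1 p).

Definition in_F2 (T : finType) (e : rel T) : Prop :=
  forall x y : T, x != y ->
    exists p : seq T, is_cycle e p /\ x \in p /\ y \in p.

Definition edge_colouring (T : finType) (e : rel T) (k : nat)
    (c : T -> T -> nat) : Prop :=
  forall x y, e x y -> c x y = c y x /\ c x y < k.

Definition rainbow (T : eqType) (c : T -> T -> nat) (p : seq T) : bool :=
  uniq [seq c xy.1 xy.2 | xy <- cycle_edges p].

Definition rainbow_cycle_colouring2 (T : finType) (e : rel T) (k : nat)
    (c : T -> T -> nat) : Prop :=
  edge_colouring e k c /\
  forall x y : T, x != y ->
    exists p : seq T, [&& is_cycle e p, rainbow c p, x \in p & y \in p].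

Definition has_rcc2 (T : finType) (e : rel T) (k : nat) : Prop :=
  exists c : T -> T -> nat, rainbow_cycle_colouring2 e k c.

Definition crx2_eq (T : finType) (e : rel T) (n : nat) : Prop :=
  has_rcc2 e n /\ forall k, k < n -> ~ has_rcc2 e k.

Definition complete_atleast3 (T : finType) (e : rel T) : Prop :=
  3 <= #|T| /\ forall x y : T, x != y -> e x y.

(* A rainbow cycle coloured from k colours has at most k edges, and every cycle
   has at least 3; so crx_2 >= 3 as soon as there are two vertices, and with 3
   colours any two vertices lie on a rainbow triangle, hence are adjacent.
   Conversely K_n, n <> 2, has a 3-colouring in which every edge lies on a
   rainbow triangle: K_0, K_1 trivially, K_5 with colour ((i + j) mod 5) / 2,
   and K_(n+3) from K_n by adding a triangle coloured i + j (mod 3) whose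
   vertex j sends colour 2 j (mod 3) to all old vertices: three distinct
   integers in a window of length 3 have distinct residues, so every new edge
   lies on a rainbow triangle with a third new vertex. *)

From mathcomp Require Import all_boot.
From mathcomp Require Import zify.

Set Implicit Arguments. Unset Strict Implicit. Unset Printing Implicit Defensive.

Definition rainbow_triangle (c : nat -> nat -> nat) (i j k : nat) : bool :=
  uniq [:: c i j; c j k; c k i].

Definition triangle_colouring (n : nat) (c : nat -> nat -> nat) : Prop :=
  [/\ forall i j, c i j = c j i, forall i j, c i j < 3 &
      forall i j, i < n -> j < n -> i != j ->
        exists2 k, k < n & [&& k != i, k != j & rainbow_triangle c i j k]].

Lemma rainbow_triangleC c i j k : (forall x y, c x y = c y x) ->
  rainbow_triangle c j i k = rainbow_triangle c i j k.
Proof.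
move=> c_sym; rewrite /rainbow_triangle (c_sym j i) (c_sym i k) (c_sym k j).
by apply: perm_uniq; rewrite perm_cons; apply/permP => P /=; rewrite addnCA.
Qed.

Lemma triangle_colouring_small n : n <= 1 -> triangle_colouring n (fun _ _ => 0).
Proof. by move=> le_n1; split=> // i j lt_in lt_jn /eqP[]; lia. Qed.

Lemma triangle_colouring5 : triangle_colouring 5 (fun i j => ((i + j) %% 5)./2).
Proof.
split=> [i j|i j|]; first by rewrite addnC.
  by case: (_ %% 5) (ltn_mod (i + j) 5) => [|[|[|[|[|]]]]].
have table : all (fun i => all (fun j => (i != j) ==> has (fun k =>
    [&& k != i, k != j & rainbow_triangle (fun i j => ((i + j) %% 5)./2) i j k])
    (iota 0 5)) (iota 0 5)) (iota 0 5) by [].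
move=> i j lt_i5 lt_j5 neq_ij.
move/allP/(_ i): table; rewrite mem_iota => /(_ lt_i5) /allP /(_ j).
rewrite mem_iota neq_ij => /(_ lt_j5) /hasP [k]; rewrite mem_iota.
by exists k.
Qed.

Definition extend3 (n : nat) (c : nat -> nat -> nat) (i j : nat) : nat :=
  if (i < n) && (j < n) then c i j
  else ((if i < n then j else i) + (if j < n then i else j)) %% 3.

Lemma triangle_colouring_extend3 n c :
  triangle_colouring n c -> triangle_colouring (n + 3) (extend3 n c).
Proof.
case=> c_sym c_lt3 c_tri.
have ext_sym i j : extend3 n c i j = extend3 n c j i.
  by rewrite /extend3 c_sym andbC addnC.
split=> // [i j|]; first by rewrite /extend3; case: ifP => _; [exact: c_lt3 | exact: ltn_mod].
move=> i j lt_i lt_j neq_ij.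
wlog lt_ij : i j lt_i lt_j neq_ij / i < j.
  move=> hwlog; case: (ltngtP i j) => [|lt_ji|eq_ij]; first exact: hwlog.
    have neq_ji : j != i by rewrite eq_sym.
    have [k lt_k /and3P [nki nkj tri]] := hwlog j i lt_j lt_i neq_ji lt_ji.
    by exists k; rewrite // nki nkj -rainbow_triangleC.
  by rewrite eq_ij eqxx in neq_ij.
rewrite /rainbow_triangle /extend3.
case: (ltnP j n) => [lt_jn | le_nj].
  have lt_in := ltn_trans lt_ij lt_jn.
  have [k lt_kn /and3P [nki nkj tri]] := c_tri i j lt_in lt_jn neq_ij.
  by exists k; [exact: ltn_addr | rewrite nki nkj lt_in lt_kn].
have [lt_in | le_ni] := ltnP i n.
  pose k := if j == n then n.+1 else n.
  have [le_nk lt_k neq_kj] : [/\ n <= k, k < n + 3 & k != j].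
    by rewrite /k; case: eqP; split; lia.
  have /negbTE nlt_kn : ~~ (k < n) by rewrite -leqNgt.
  by exists k => //; rewrite nlt_kn /= !inE; lia.
(* the third new vertex, n + (3 - (i - n) - (j - n)) *)
pose k := 3 * n + 3 - i - j.
have /andP [le_nk lt_k] : n <= k < n + 3 by rewrite /k; lia.
have /negbTE nlt_kn : ~~ (k < n) by rewrite -leqNgt.
by exists k => //; rewrite nlt_kn /= !inE; lia.
Qed.

Lemma triangle_colouring_exists n : n != 2 -> exists c, triangle_colouring n c.
Proof.
elim/ltn_ind: n => n IH ne_n2.
have [le_n1 | lt1n] := leqP n 1.
  by exists (fun _ _ => 0); apply: triangle_colouring_small.
have [-> | ne_n5] := eqVneq n 5.
  by exists (fun i j => ((i + j) %% 5)./2); apply: triangle_colouring5.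
have [c col_c] : exists c, triangle_colouring (n - 3) c by apply: IH; lia.
have -> : n = n - 3 + 3 by lia.
by exists (extend3 (n - 3) c); apply: triangle_colouring_extend3.
Qed.

Section CycleEdges.

Variables (T : eqType) (e : rel T).

Lemma path_zip_rel x s y :
  path e x (rcons s y) -> all (fun ab => e ab.1 ab.2) (zip (x :: s) (rcons s y)).
Proof.
elim: s x => [|a s IHs] x /=; first by rewrite andbT => ->.
by case/andP=> -> /IHs.
Qed.

Lemma cycle_edges_rel p : cycle e p -> all (fun ab => e ab.1 ab.2) (cycle_edges p).
Proof. by case: p => [|x s] //; rewrite /cycle_edges rot1_cons; apply: path_zip_rel. Qed.

Lemma size_cycle_edges (p : seq T) : size (cycle_edges p) = size p.
Proof. by rewrite /cycle_edges size_zip size_rot minnn. Qed.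

End CycleEdges.

Section RainbowCycles.

Variables (T : finType) (e : rel T).

Lemma rainbow_cycle_size k c p :
  edge_colouring e k c -> cycle e p -> rainbow c p -> size p <= k.
Proof.
move=> col_c cycle_p rainbow_p.
rewrite -size_cycle_edges -(size_map (fun ab => c ab.1 ab.2)) -(size_iota 0 k).
apply: uniq_leq_size rainbow_p _ => _ /mapP [ab ab_p ->].
by rewrite mem_iota; case: (col_c _ _ (allP (cycle_edges_rel cycle_p) ab ab_p)).
Qed.

Lemma has_rcc2_ge3 k (x y : T) : x != y -> has_rcc2 e k -> 3 <= k.
Proof.
move=> neq_xy [c [col_c rcc_c]].
have [p /and4P [/and3P [size_p _ cycle_p] rainbow_p _ _]] := rcc_c x y neq_xy.
exact: leq_trans size_p (rainbow_cycle_size col_c cycle_p rainbow_p).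
Qed.

Lemma has_rcc2_trivial : irreflexive e -> #|T| <= 1 -> has_rcc2 e 0.
Proof.
move=> e_irr /card_le1_eqP all_eq.
have eq_xy (x y : T) : x = y by apply: all_eq.
exists (fun _ _ => 0); split=> x y; first by rewrite (eq_xy x y) e_irr.
by rewrite (eq_xy x y) eqxx.
Qed.

Lemma in_F2_card_ge3 (x y : T) : in_F2 e -> x != y -> 3 <= #|T|.
Proof.
move=> F2 /F2 [p [/and3P [size_p uniq_p _] _]].
by rewrite (leq_trans size_p) // -(card_uniqP uniq_p) max_card.
Qed.

Lemma triangle_rel (x y a b d : T) : symmetric e -> cycle e [:: a; b; d] ->
  x \in [:: a; b; d] -> y \in [:: a; b; d] -> x != y -> e x y.
Proof.
move=> e_sym /and4P [e_ab e_bd e_da _]; rewrite !inE.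
by case/or3P=> /eqP-> /or3P [] /eqP->; rewrite ?eqxx // e_sym.
Qed.

Lemma has_rcc2_3_adj : symmetric e -> has_rcc2 e 3 -> forall x y, x != y -> e x y.
Proof.
move=> e_sym [c [col_c rcc_c]] x y neq_xy.
have [p /and4P [/and3P [size_p _ cycle_p] rainbow_p x_p y_p]] := rcc_c x y neq_xy.
have size3_p : size p = 3 by apply/eqP; rewrite eqn_leq size_p (rainbow_cycle_size col_c)...
case: p size3_p cycle_p x_p y_p {size_p rainbow_p} => [|a [|b [|d []]]] // _.
by move=> cycle_p x_p y_p; apply: triangle_rel e_sym cycle_p x_p y_p neq_xy.
Qed.

Lemma has_rcc2_3_complete : complete_atleast3 e -> has_rcc2 e 3.
Proof.
case=> card_ge3 adj.
have [c [c_sym c_lt3 c_tri]] : exists c, triangle_colouring #|T| c.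
  by apply: triangle_colouring_exists; rewrite neq_ltn card_ge3 orbT.
exists (fun x y => c (enum_rank x) (enum_rank y)); split=> // x y neq_xy.
have neq_rank : (enum_rank x : nat) != enum_rank y.
  by rewrite (inj_eq val_inj) (inj_eq enum_rank_inj).
have [k lt_k /and3P [neq_kx neq_ky tri]] := c_tri _ _ (ltn_ord _) (ltn_ord _) neq_rank.
pose z := enum_val (Ordinal lt_k).
have rank_z : (enum_rank z : nat) = k by rewrite enum_valK.
have neq_zx : z != x by apply: contraNneq neq_kx => <-; rewrite rank_z.
have neq_zy : z != y by apply: contraNneq neq_ky => <-; rewrite rank_z.
exists [:: x; y; z]; rewrite /is_cycle /= !inE !eqxx !orbT !andbT.
rewrite negb_or neq_xy !(eq_sym _ z) neq_zx neq_zy !adj // 1?eq_sym //=.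
by move: tri; rewrite -rank_z.
Qed.

End RainbowCycles.

Theorem theorem3 (T : finType) (e : rel T)
    (e_sym : symmetric e) (e_irr : irreflexive e) (hF2 : in_F2 e) :
  crx2_eq e 3 <-> complete_atleast3 e.
Proof.
split=> [[rcc3 min3] | complete].
  have [le_T1 | /card_gt1P [x [y [_ _ neq_xy]]]] := leqP #|T| 1.
    by case: (min3 0) => //; apply: has_rcc2_trivial e_irr le_T1.
  by split; [apply: in_F2_card_ge3 hF2 neq_xy | apply: has_rcc2_3_adj e_sym rcc3].
split=> [|k lt_k3 rcc_k]; first exact: has_rcc2_3_complete.
have [x [y [_ _ neq_xy]]] := card_gt1P (ltnW complete.1).
by have := has_rcc2_ge3 neq_xy rcc_k; rewrite leqNgt lt_k3.
Qed.
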